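(* Let $\Omega := \{0,1\}^{\mathbb{Z}}$, let $\tau:\Omega\to\Omega$ be the shift $(\tau\omega)(x) := \omega(x-1)$, and let $T:\mathbb{Z}\to\mathbb{Z}$ be $Tx := x+1$. Let $\Delta\notin\mathbb{Z}$ be an extra symbol and set $T(\Delta):=\Delta$. Let $X:\Omega\to\mathbb{Z}\cup\{\Delta\}$ be a function such that $X^{-1}\{\Delta\}$ is countable and $X(\tau\omega)=T(X(\omega))$ for all $\omega\in\Omega$. Let $\mathcal{F}$ be any $\sigma$-algebra on $\Omega$ that contains all singletons and satisfies $\tau A\in\mathcal{F}$ whenever $A\in\mathcal{F}$ (where $\tau A:=\{\tau\omega:\omega\in A\}$), and suppose there is a measure $\mu$ on $\mathcal{F}$ with $\mu=\mu\circ\tau$, $\mu(\Omega)\in(0,\infty)$, and $\mu(\{\omega\})=0$ for all $\omega\in\Omega$. Then $X$ is not measurable with respect to $\mathcal{F}$, i.e., there exists $x\in\mathbb{Z}$ with $X^{-1}\{x\}\notin\mathcal{F}$.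
   Context: A function $X:\Omega\to\mathbb{Z}\cup\{\Delta\}$ is called measurable with respect to $\mathcal{F}$ if $X^{-1}\{x\}\in\mathcal{F}$ for all $x\in\mathbb{Z}$. *)

From mathcomp Require Import all_boot all_order all_algebra.
From mathcomp Require Import all_classical all_reals all_analysis.
Set Implicit Arguments. Unset Strict Implicit. Unset Printing Implicit Defensive.
Import Order.TTheory GRing.Theory Num.Theory.
Local Open Scope classical_set_scope.
Local Open Scope ring_scope.

Definition Omega := int -> bool.

Definition tau (w : Omega) : Omega := fun x => w (x - 1).

Definition ZD := option int.
Definition Delta : ZD := None.

Definition Tsh (z : ZD) : ZD :=
  match z with Some x => Some (x + 1) | None => None end.

Definition is_measure_on (R : realType) (T : Type) (F : set (set T))
    (mu : set T -> \bar R) : Prop :=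
  [/\ mu set0 = 0%E,
      (forall A, F A -> (0 <= mu A)%E) &
      (forall A : (set T)^nat, (forall n, F (A n)) -> trivIset setT A ->
         (fun n => \sum_(0 <= i < n) mu (A i))%E @ \oo --> mu (\bigcup_n A n))].

Definition measurable_wrt (F : set (set Omega)) (X : Omega -> ZD) : Prop :=
  forall x : int, F (X @^-1` [set Some x]).

From mathcomp Require Import all_boot all_order all_algebra.
From mathcomp Require Import all_classical all_reals all_analysis.
From HB Require Import structures.

(* The fibers A_x := X^-1 {x} satisfy tau A_x = A_(x+1), so by shift invariance
   they all have the same measure c, while X^-1 {Delta} is countable, hence
   null.  Omega is the disjoint union of X^-1 {Delta} and the A_x, x in Z, so
   mu Omega is a countable sum of copies of c: it is 0 if c = 0 and infinite
   otherwise, contradicting 0 < mu Omega < +oo. *)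

Set Implicit Arguments.
Unset Strict Implicit.
Unset Printing Implicit Defensive.
Import Order.TTheory GRing.Theory Num.Theory.
Local Open Scope classical_set_scope.
Local Open Scope ring_scope.

Lemma enatmul_bounded_eq0 (R : realType) (c M : \bar R) :
  (0 <= c)%E -> (M < +oo)%E -> (forall n, c *+ n <= M)%E -> c = 0%E.
Proof.
move=> c_ge0 M_fin cM.
have M_ge0 : (0 <= M)%E by have := cM 0%N; rewrite mule0n.
have c_fin : (c < +oo)%E.
  by apply: le_lt_trans M_fin; have := cM 1%N; rewrite muleS mule0n adde0.
case: M M_fin M_ge0 cM => [m _| |//] //.
case: c c_ge0 c_fin => [r| |//] //; rewrite !lee_fin le0r.
move=> /orP[/eqP->//|r_gt0] _ m_ge0 rM; exfalso.
have := rM (Num.Def.archi_bound (m / r)); rewrite -EFin_natmul lee_fin.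
apply/negP; rewrite -ltNge -mulr_natr -ltr_pdivrMl // mulrC.
by apply: archi_boundP; rewrite divr_ge0 // ltW.
Qed.

Section CountablyAdditive.
Variables (R : realType) (T : Type) (F : set (set T)) (mu : set T -> \bar R).
Hypothesis F_sigma : sigma_algebra setT F.
Hypothesis mu_measure : is_measure_on F mu.

Lemma measure_ge0 A : F A -> (0 <= mu A)%E.
Proof. by have [_ mu_ge0 _] := mu_measure; exact: mu_ge0. Qed.

Lemma measure_partial_sum_le (A : (set T)^nat) :
    (forall n, F (A n)) -> trivIset setT A ->
  forall n, (\sum_(0 <= i < n) mu (A i) <= mu (\bigcup_k A k))%E.
Proof.
move=> FA tA n; have [_ _ mu_add] := mu_measure.
rewrite -(cvg_lim _ (mu_add A FA tA)) //.
by apply: nneseries_lim_ge => k _ _; exact: measure_ge0.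
Qed.

Lemma measure_bigcup_null (A : (set T)^nat) :
    (forall n, F (A n)) -> trivIset setT A -> (forall n, mu (A n) = 0%E) ->
  mu (\bigcup_n A n) = 0%E.
Proof.
move=> FA tA A0; have [_ _ mu_add] := mu_measure.
rewrite -(cvg_lim _ (mu_add A FA tA)) //.
have -> : (fun n => \sum_(0 <= i < n) mu (A i))%E = cst 0%E.
  by apply: funext => n; rewrite big1.
exact: lim_cst.
Qed.

Section NullSingletons.
Hypothesis F_set1 : forall x : T, F [set x].
Hypothesis mu_set1 : forall x : T, mu [set x] = 0%E.

Lemma countable_measurable_null (A : set T) : countable A -> F A /\ mu A = 0%E.
Proof.
have [F0 _ F_bigcup] := F_sigma; have [mu0 _ _] := mu_measure.
move=> /pfcard_geP[->|/surjfunPex[e ->]]; first by [].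
pose E := seqDU (fun n => [set e n]).
have FE n : F (E n) /\ mu (E n) = 0%E.
  by have /subset_set1[->|->] : E n `<=` [set e n] by move=> x [].
have -> : e @` setT = \bigcup_n E n.
  rewrite /E -seqDU_bigcup_eq; apply/seteqP.
  by split=> [x [n _ <-]|x [n _ ->]]; exists n.
split; first by apply: F_bigcup => n; case: (FE n).
apply: measure_bigcup_null => [n||n]; first (by case: (FE n)); last by case: (FE n).
exact: trivIset_seqDU.
Qed.

End NullSingletons.

Lemma cover_const_measure_eq0 (B : (set T)^nat) (c : \bar R) :
    (forall n, F (B n)) -> trivIset setT B -> \bigcup_n B n = setT ->
    mu (B 0%N) = 0%E -> (forall n, mu (B n.+1) = c) ->
  (mu setT < +oo)%E -> mu setT = 0%E.
Proof.
move=> FB tB BT B0 Bc mu_fin.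
have c_ge0 : (0 <= c)%E by rewrite -(Bc 0%N); exact: measure_ge0.
have c0 : c = 0%E.
  apply: (enatmul_bounded_eq0 c_ge0 mu_fin) => n.
  have := measure_partial_sum_le FB tB n.+1.
  rewrite BT big_nat_recl // B0 add0e.
  by under eq_bigr do rewrite Bc; rewrite sumr_const_nat subn0.
rewrite -BT; apply: measure_bigcup_null => // -[|n] //.
by rewrite Bc c0.
Qed.

End CountablyAdditive.

HB.instance Definition _ := isPointed.Build int 0.

Lemma nat_int_bij : exists e : nat -> int, bijective e.
Proof.
have int_infinite : infinite_set [set: int].
  by apply/infiniteP/pcard_leTP/injPex; exists Posz => // m n _ _ [].
have /card_set_bijP[e] : ([set: nat] #= [set: int])%card.
  by rewrite card_eq_sym; apply: eq_card_nat.
by rewrite setTT_bijective; exists e.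
Qed.

Lemma int_shift_invariant (V : Type) (f : int -> V) :
  (forall x, f (x + 1) = f x) -> forall x, f x = f 0.
Proof.
move=> f1; elim/int_ind => [//|n IH|n IH]; first by rewrite -IH -addn1 PoszD f1.
by rewrite -IH -(f1 (- n.+1%:Z)) -addn1 PoszD opprD subrK.
Qed.

Section Fibers.
Variables (T I : Type) (X : T -> option I) (e : nat -> I).

Definition fiber_seq : (set T)^nat :=
  fun n => if n is k.+1 then X @^-1` [set Some (e k)] else X @^-1` [set None].

Lemma trivIset_fiber_seq : injective e -> trivIset setT fiber_seq.
Proof.
move=> e_inj [|i] [|j] _ _ [w []] //=; rewrite /preimage/= => -> //.
by case=> /e_inj ->.
Qed.

Lemma bigcup_fiber_seq : bijective e -> \bigcup_n fiber_seq n = setT.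
Proof.
case=> g _ gK; apply/seteqP; split=> // w _.
case Xw: (X w) => [i|]; last by exists 0%N.
by exists (g i).+1 => //=; rewrite /preimage/= Xw gK.
Qed.

End Fibers.

Definition tau_inv (w : Omega) : Omega := fun x => w (x + 1).

Lemma tau_invK : cancel tau_inv tau.
Proof. by move=> w; apply: funext => x; rewrite /tau /tau_inv subrK. Qed.

Lemma image_tau_fiber (X : Omega -> ZD) :
    (forall w, X (tau w) = Tsh (X w)) ->
  forall x, tau @` (X @^-1` [set Some x]) = X @^-1` [set Some (x + 1)].
Proof.
move=> X_tau x; apply/seteqP; split=> [_ [w Xw <-]|w Xw].
  by rewrite /preimage/= X_tau Xw.
exists (tau_inv w); last exact: tau_invK.
move: Xw; rewrite /preimage/= -{1}(tau_invK w) X_tau.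
by case: (X (tau_inv w)) => // y [/addIr ->].
Qed.

Theorem lemma2 (R : realType) (X : Omega -> ZD) (F : set (set Omega))
    (mu : set Omega -> \bar R) :
  countable (X @^-1` [set Delta]) ->
  (forall w : Omega, X (tau w) = Tsh (X w)) ->
  sigma_algebra setT F ->
  (forall w : Omega, F [set w]) ->
  (forall A, F A -> F (tau @` A)) ->
  is_measure_on F mu ->
  (forall A, F A -> mu (tau @` A) = mu A) ->
  (0 < mu setT)%E -> (mu setT < +oo)%E ->
  (forall w : Omega, mu [set w] = 0%E) ->
  ~ measurable_wrt F X /\ exists x : int, ~ F (X @^-1` [set Some x]).
Proof.
move=> Delta_countable X_tau F_sigma F_set1 _ mu_measure mu_tau mu_gt0 mu_fin
  mu_set1.
suff X_nmeas : ~ measurable_wrt F X by split=> //; apply/existsNP.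
move=> X_meas; pose A x := X @^-1` [set Some x].
have mu_A : forall x, mu (A x) = mu (A 0).
  apply: int_shift_invariant => x.
  by rewrite /A -image_tau_fiber // mu_tau.
have [F_Delta mu_Delta] := countable_measurable_null F_sigma mu_measure F_set1
  mu_set1 Delta_countable.
have [e e_bij] := nat_int_bij.
have F_fibers n : F (fiber_seq X e n) by case: n => [|k] //=; exact: X_meas.
have mu0 := cover_const_measure_eq0 mu_measure F_fibers
  (trivIset_fiber_seq (bij_inj e_bij)) (bigcup_fiber_seq X e_bij)
  mu_Delta (fun n => mu_A (e n)) mu_fin.
by move: mu_gt0; rewrite mu0 ltxx.
Qed.
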